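(* Let $\sigma$ be an extended signature, $H\in\mathfrak a\cap\mathfrak m_{\sigma,1}$, and $\mathfrak l_{H,\sigma}=\mathrm{Ad}_{\exp H}\mathfrak l_\sigma$. Then $\mathfrak l_{H,\sigma}\cap\mathfrak k=\mathfrak t$ if and only if $\alpha(H)\ne0$ for every root $\alpha$ with $\sigma(\alpha)=1$.
   Context: $\mathfrak g$ is complex semisimple, $\mathfrak k$ a compact real form with complex conjugation $\theta$, $G$ the adjoint group, $\mathfrak t\subset\mathfrak k$ maximal abelian, $\mathfrak h=\mathfrak t\otimes\mathbb C$, $\mathfrak a=i\mathfrak t$, roots $\Sigma$, positive roots $\Sigma_+$, simple roots $\alpha_1,\dots,\alpha_l$. An extended signature is a map $\sigma:\Sigma\to\{-1,0,1\}$ with $\sigma(\sum_im_i\alpha_i)=\prod_i\sigma(\alpha_i)^{m_i}$. Let $S_\sigma=\{\alpha_i:\sigma(\alpha_i)\ne0\}$, $[S_\sigma]$ the roots in its span, $\mathfrak m_\sigma=\mathfrak h\oplus\bigoplus_{\alpha\in[S_\sigma]}\mathfrak g_\alpha$, $\mathfrak m_{\sigma,1}=[\mathfrak m_\sigma,\mathfrak m_\sigma]$, $\mathfrak n_\sigma=\bigoplus_{\alpha\in\Sigma_+\setminus[S_\sigma]}\mathfrak g_\alpha$, $a_\sigma$ the automorphism of $\mathfrak m_\sigma$ acting as identity on $\mathfrak h$ and by the scalar $\sigma(\alpha)$ on $\mathfrak g_\alpha$, and $\mathfrak l_\sigma=\{X\in\mathfrak m_\sigma:a_\sigma\theta X=X\}+\mathfrak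 n_\sigma$ (a Lagrangian subalgebra of $\mathfrak g$ for the imaginary part of the Killing form). *)

From mathcomp Require Import all_boot all_order all_algebra.
From mathcomp Require Import complex.
From mathcomp Require Import all_classical all_reals all_analysis.

Set Implicit Arguments.
Unset Strict Implicit.
Unset Printing Implicit Defensive.

Import Order.TTheory GRing.Theory Num.Theory.
Import numFieldNormedType.Exports.
Local Open Scope classical_set_scope.
Local Open Scope ring_scope.

(* The complex Lie algebra g is modelled as C^n = 'rV[R[i]]_n (any finite
   dimensional complex vector space is of this form) with a bracket [br]. *)

Section LieSetup.
Variables (R : realType) (n : nat).
Local Notation C := (R[i]).
Local Notation V := ('rV[C]_n).

Definition lie_bracket (br : V -> V -> V) : Prop :=
  [/\ (forall (c : C) x y z, br (c *: x + y) z = c *: br x z + br y z),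
      (forall (c : C) x y z, br x (c *: y + z) = c *: br x y + br x z),
      (forall x, br x x = 0) &
      (forall x y z, br x (br y z) + br y (br z x) + br z (br x y) = 0)].

Definition ad_mx (br : V -> V -> V) (x : V) : 'M[C]_n := lin1_mx (br x).
Definition killing (br : V -> V -> V) (x y : V) : C :=
  \tr (ad_mx br x *m ad_mx br y).

(* semisimple (Cartan's criterion form): nondegenerate Killing form. *)
Definition semisimple (br : V -> V -> V) : Prop :=
  forall x, (forall y, killing br x y = 0) -> x = 0.

(* theta is the complex conjugation of g w.r.t. a compact real form k:
   a conjugate-linear involutive Lie algebra automorphism (of g as real
   Lie algebra) whose fixed real form k has negative definite Killing form. *)
Definition compact_conjugation (br : V -> V -> V) (theta : V -> V) : Prop :=
  [/\ (forall x y, theta (x + y) = theta x + theta y),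
      (forall (c : C) x, theta (c *: x) = (c^*)%C *: theta x),
      (forall x, theta (theta x) = x),
      (forall x y, theta (br x y) = br (theta x) (theta y)) &
      (forall x, theta x = x -> x != 0 -> killing br x x < 0)].

Definition kset (theta : V -> V) : V -> Prop := fun x => theta x = x.

Definition real_subspace (P : V -> Prop) : Prop :=
  [/\ P 0, (forall x y, P x -> P y -> P (x + y)) &
      (forall (r : R) x, P x -> P ((r%:C)%C *: x))].

Definition max_abelian_in (br : V -> V -> V) (K t : V -> Prop) : Prop :=
  [/\ real_subspace t, (forall x, t x -> K x),
      (forall x y, t x -> t y -> br x y = 0) &
      (forall s : V -> Prop, real_subspace s -> (forall x, s x -> K x) ->
         (forall x y, s x -> s y -> br x y = 0) ->
         (forall x, t x -> s x) -> forall x, s x -> t x)].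

Definition hset (t : V -> Prop) : V -> Prop :=
  fun x => exists A B, [/\ t A, t B & x = A + 'i *: B].
Definition aset (t : V -> Prop) : V -> Prop :=
  fun x => exists B, t B /\ x = 'i *: B.

(* root spaces and roots (a root is given by a functional; only its values
   on h matter) *)
Definition root_space (br : V -> V -> V) (t : V -> Prop) (al : V -> C) :
  V -> Prop := fun X => forall Z, hset t Z -> br Z X = al Z *: X.
Definition is_root (br : V -> V -> V) (t : V -> Prop) (al : V -> C) : Prop :=
  (exists Z, hset t Z /\ al Z != 0) /\
  (exists X, X != 0 /\ root_space br t al X).

Variable l : nat.

Definition root_coeffs (t : V -> Prop) (alpha : 'I_l -> V -> C)
  (al : V -> C) (m : 'I_l -> int) : Prop :=
  forall Z, hset t Z -> al Z = \sum_(i < l) (m i)%:~R * alpha i Z.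

Definition simple_system (br : V -> V -> V) (t : V -> Prop)
  (alpha : 'I_l -> V -> C) : Prop :=
  [/\ (forall i, is_root br t (alpha i)),
      (forall c : 'I_l -> C,
         (forall Z, hset t Z -> \sum_(i < l) c i * alpha i Z = 0) ->
         forall i, c i = 0) &
      (forall al, is_root br t al -> exists m, root_coeffs t alpha al m /\
         ((forall i, 0 <= m i) \/ (forall i, m i <= 0)))].

Definition is_pos_root br t alpha (al : V -> C) : Prop :=
  is_root br t al /\ exists m, root_coeffs t alpha al m /\ forall i, 0 <= m i.

(* extended signature, given by its values s i = sigma(alpha_i) in {-1,0,1};
   sigma(sum m_i alpha_i) = prod_i s_i^{m_i}, read as prod_i s_i^{|m_i|}
   (identical for s_i = +-1; for s_i = 0 it is 0 iff m_i <> 0). *)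
Definition ext_signature (s : 'I_l -> int) : Prop :=
  forall i, s i \in [:: -1; 0; 1].
Definition sigma_val (s : 'I_l -> int) (m : 'I_l -> int) : int :=
  \prod_(i < l) (s i) ^+ `|m i|%N.

Definition in_span_S br t alpha (s : 'I_l -> int) (al : V -> C) : Prop :=
  is_root br t al /\ exists m, root_coeffs t alpha al m /\
    forall i, m i != 0 -> s i != 0.

Definition span_of (P : V -> Prop) : V -> Prop :=
  fun X => exists (k : nat) (Y : 'I_k -> V),
    (forall j, P (Y j)) /\ X = \sum_(j < k) Y j.

Definition m_sigma br t alpha s : V -> Prop :=
  span_of (fun Y => hset t Y \/
    exists al, in_span_S br t alpha s al /\ root_space br t al Y).

Definition m_sigma1 br t alpha s : V -> Prop :=
  span_of (fun Y => exists P Q, [/\ m_sigma br t alpha s P,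
                                   m_sigma br t alpha s Q & Y = br P Q]).

Definition n_sigma br t alpha s : V -> Prop :=
  span_of (fun Y => exists al, [/\ is_pos_root br t alpha al,
                                  ~ in_span_S br t alpha s al &
                                  root_space br t al Y]).

(* a_sigma X = Y : a_sigma is the identity on h and sigma(al) on g_al *)
Definition a_sigma_rel br t alpha s (X Y : V) : Prop :=
  exists (Z : V) (k : nat) (al : 'I_k -> V -> C) (m : 'I_k -> 'I_l -> int)
         (W : 'I_k -> V),
    [/\ hset t Z,
        (forall j, [/\ in_span_S br t alpha s (al j),
                       root_coeffs t alpha (al j) (m j) &
                       root_space br t (al j) (W j)]),
        X = Z + \sum_(j < k) W j &
        Y = Z + \sum_(j < k) ((sigma_val s (m j))%:~R : C) *: W j].

Definition l_sigma br theta t alpha s : V -> Prop :=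
  fun X => exists A B,
    [/\ m_sigma br t alpha s A, a_sigma_rel br t alpha s (theta A) A,
        n_sigma br t alpha s B & X = A + B].

(* Ad_{exp H} X = exp(ad H) X = sum_k (ad H)^k X / k!  (series converging
   coordinatewise) *)
Definition Ad_exp_rel (br : V -> V -> V) (H X Y : V) : Prop :=
  forall j : 'I_n,
    ((fun N : nat => complex.Re
        (\sum_(k < N) ((k`!)%:R)^-1 * (iter k (br H) X) 0 j)) @ \oo -->
       complex.Re (Y 0 j)) /\
    ((fun N : nat => complex.Im
        (\sum_(k < N) ((k`!)%:R)^-1 * (iter k (br H) X) 0 j)) @ \oo -->
       complex.Im (Y 0 j)).

Definition l_H_sigma br theta t alpha s (H : V) : V -> Prop :=
  fun Y => exists X, l_sigma br theta t alpha s X /\ Ad_exp_rel br H X Y.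

End LieSetup.

From mathcomp Require Import all_boot all_order all_algebra.
From mathcomp Require Import complex.
From mathcomp Require Import all_classical all_reals all_analysis.
From mathcomp Require Import ring lra.
Import Order.TTheory GRing.Theory Num.Theory.
Import numFieldNormedType.Exports.
Set Implicit Arguments.
Unset Strict Implicit.
Unset Printing Implicit Defensive.
Local Open Scope ring_scope.

(* The Hermitian form <x, y> = -B(x, theta y) is positive definite, root spaces
   for distinct roots are <,>-orthogonal, B pairs g_al only with g_-al, roots are
   imaginary on t, hence real on a, and Ad_{exp H} acts on g_al by e^{al(H)} > 0.
   If al(H) = 0 for a root with sigma(al) = 1, then for a root vector E of al the
   element E + theta E lies in l_sigma and is fixed by theta and by Ad_{exp H},
   but it does not commute with h, so it is not in t.
   Conversely let X = Ad_{exp H}(A + N) = theta X with A in m_sigma fixed by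
   a_sigma theta and N in n_sigma.  For a root vector W of al occurring in A,
   computing <W, X> directly and as -B(W, X) gives
   <W, X> = e^{al(H)} sigma(al) c = e^{-al(H)} sigma(al)^2 c for some c, which
   forces <W, X> = 0 unless sigma(al) = 1 and al(H) = 0.  Root vectors of n_sigma
   are <,>-orthogonal to X because n_sigma is B-isotropic and B-orthogonal to
   m_sigma.  So the root components of X vanish and X lies in h, hence in t. *)


Section LieAlgebra.
Variables (R : realType) (n : nat) (br : 'rV[R[i]]_n -> 'rV[R[i]]_n -> 'rV[R[i]]_n).
Hypothesis br_lie : lie_bracket br.

Lemma brDl x y z : br (x + y) z = br x z + br y z.
Proof. by case: br_lie => brl _ _ _; have := brl 1 x y z; rewrite !scale1r. Qed.

Lemma brDr x y z : br x (y + z) = br x y + br x z.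
Proof. by case: br_lie => _ brr _ _; have := brr 1 x y z; rewrite !scale1r. Qed.

Lemma br0l z : br 0 z = 0.
Proof. by apply: (addrI (br 0 z)); rewrite -brDl !addr0. Qed.

Lemma br0r z : br z 0 = 0.
Proof. by apply: (addrI (br z 0)); rewrite -brDr !addr0. Qed.

Lemma brZl c x z : br (c *: x) z = c *: br x z.
Proof. by case: br_lie => brl _ _ _; have := brl c x 0 z; rewrite !addr0 br0l addr0. Qed.

Lemma brZr c x z : br z (c *: x) = c *: br z x.
Proof. by case: br_lie => _ brr _ _; have := brr c z x 0; rewrite !addr0 br0r addr0. Qed.

Lemma brNr x z : br z (- x) = - br z x.
Proof. by rewrite -scaleN1r brZr scaleN1r. Qed.

Lemma br_skew x y : br x y = - br y x.
Proof.
case: br_lie => _ _ brxx _; have := brxx (x + y).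
by rewrite brDl !brDr !brxx add0r addr0 => /eqP; rewrite addr_eq0 => /eqP.
Qed.

Lemma br_sumr I (r : seq I) (P : pred I) (F : I -> _) x :
  br x (\sum_(i <- r | P i) F i) = \sum_(i <- r | P i) br x (F i).
Proof. by elim/big_rec2: _ => [|i a b _ <-]; rewrite ?br0r ?brDr. Qed.

Lemma mul_rV_ad_mx x u : u *m ad_mx br x = br x u.
Proof.
rewrite /ad_mx [u in RHS]row_sum_delta br_sumr; apply/rowP=> j.
by rewrite !mxE summxE; apply: eq_bigr => k _; rewrite brZr !mxE.
Qed.

Lemma ad_mx_br x y :
  ad_mx br (br x y) = ad_mx br y *m ad_mx br x - ad_mx br x *m ad_mx br y.
Proof.
apply/eqP/mulmxP => u; rewrite mulmxBr !mulmxA !mul_rV_ad_mx.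
case: br_lie => _ _ _ jacobi; have := jacobi x y u.
rewrite (br_skew u (br x y)) (br_skew u x) brNr => /eqP.
by rewrite subr_eq0 => /eqP.
Qed.

Lemma ad_mxD x y : ad_mx br (x + y) = ad_mx br x + ad_mx br y.
Proof. by apply/eqP/mulmxP => u; rewrite mulmxDr !mul_rV_ad_mx brDl. Qed.

Lemma ad_mxZ c x : ad_mx br (c *: x) = c *: ad_mx br x.
Proof. by apply/eqP/mulmxP => u; rewrite -scalemxAr !mul_rV_ad_mx brZl. Qed.

Lemma killingC x y : killing br x y = killing br y x.
Proof. exact: mxtrace_mulC. Qed.

Lemma killingDl x y z : killing br (x + y) z = killing br x z + killing br y z.
Proof. by rewrite /killing ad_mxD mulmxDl mxtraceD. Qed.

Lemma killingZl c x z : killing br (c *: x) z = c * killing br x z.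
Proof. by rewrite /killing ad_mxZ -scalemxAl mxtraceZ. Qed.

Lemma killingDr x y z : killing br z (x + y) = killing br z x + killing br z y.
Proof. by rewrite killingC killingDl !(killingC z). Qed.

Lemma killingZr c x z : killing br z (c *: x) = c * killing br z x.
Proof. by rewrite killingC killingZl killingC. Qed.

Lemma killing0l z : killing br 0 z = 0.
Proof. by rewrite -(scale0r 0) killingZl mul0r. Qed.

Lemma killing0r z : killing br z 0 = 0.
Proof. by rewrite killingC killing0l. Qed.

Lemma killingBr x y z : killing br z (x - y) = killing br z x - killing br z y.
Proof. by rewrite killingDr -scaleN1r killingZr mulN1r. Qed.

Lemma killing_sumr I (r : seq I) (P : pred I) (F : I -> _) x :
  killing br x (\sum_(i <- r | P i) F i) = \sum_(i <- r | P i) killing br x (F i).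
Proof. by elim/big_rec2: _ => [|i a b _ <-]; rewrite ?killing0r ?killingDr. Qed.

Lemma killing_brl x y z : killing br (br x y) z = - killing br y (br x z).
Proof.
rewrite /killing !ad_mx_br mulmxBl mulmxBr !raddfB /= opprK addrC !mulmxA.
by rewrite -(mulmxA (ad_mx br x)) (mxtrace_mulC (ad_mx br x)).
Qed.

End LieAlgebra.

Lemma conjc_i (R : realType) : (('i%C : R[i])^*)%C = - 'i%C.
Proof. by apply/eqP; rewrite eq_complex /= oppr0 !eqxx. Qed.

(* Rewriting with rmorphM and friends leaves conjc hidden behind its morphism
   structure; these restatements keep it visible to the conjc lemmas. *)
Lemma conjcD (R : realType) (a b : R[i]) : ((a + b)^*)%C = (a^*)%C + (b^*)%C.
Proof. exact: rmorphD. Qed.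

Lemma conjcN (R : realType) (a : R[i]) : ((- a)^*)%C = - (a^*)%C.
Proof. exact: rmorphN. Qed.

Lemma conjcM (R : realType) (a b : R[i]) : ((a * b)^*)%C = (a^*)%C * (b^*)%C.
Proof. exact: rmorphM. Qed.

Lemma conjc_int (R : realType) (z : int) : ((z%:~R : R[i])^*)%C = z%:~R.
Proof. by rewrite -(rmorph_int (@real_complex R)) conjc_real. Qed.

Lemma conjc_fixed_real (R : realType) (a : R[i]) :
  (a^*)%C = a -> a = ((complex.Re a)%:C)%C.
Proof.
by case: a => a b /eqP; rewrite eq_complex /= => /andP[_ /eqP h]; congr Complex; lra.
Qed.

Section CompactConjugation.
Variables (R : realType) (n : nat) (br : 'rV[R[i]]_n -> 'rV[R[i]]_n -> 'rV[R[i]]_n)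
  (theta : 'rV[R[i]]_n -> 'rV[R[i]]_n).
Hypothesis br_lie : lie_bracket br.
Hypothesis theta_compact : compact_conjugation br theta.

Lemma thetaD x y : theta (x + y) = theta x + theta y.
Proof. by case: theta_compact. Qed.

Lemma thetaZ c x : theta (c *: x) = (c^*)%C *: theta x.
Proof. by case: theta_compact. Qed.

Lemma thetaK x : theta (theta x) = x.
Proof. by case: theta_compact. Qed.

Lemma theta_br x y : theta (br x y) = br (theta x) (theta y).
Proof. by case: theta_compact. Qed.

Lemma theta0 : theta 0 = 0.
Proof. by rewrite -(scale0r 0) thetaZ rmorph0 !scale0r. Qed.

Lemma thetaB x y : theta (x - y) = theta x - theta y.
Proof. by rewrite thetaD -scaleN1r thetaZ rmorphN1 scaleN1r. Qed.

Lemma theta_iZ x : theta ('i%C *: x) = - ('i%C *: theta x).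
Proof. by rewrite thetaZ conjc_i scaleNr. Qed.

Definition herm x y := - killing br x (theta y).

Lemma hermDl x y z : herm (x + y) z = herm x z + herm y z.
Proof. by rewrite /herm killingDl // opprD. Qed.

Lemma hermZl c x z : herm (c *: x) z = c * herm x z.
Proof. by rewrite /herm killingZl // mulrN. Qed.

Lemma hermDr x y z : herm z (x + y) = herm z x + herm z y.
Proof. by rewrite /herm thetaD killingDr // opprD. Qed.

Lemma hermZr c x z : herm z (c *: x) = (c^*)%C * herm z x.
Proof. by rewrite /herm thetaZ killingZr // mulrN. Qed.

Lemma herm_suml I (r : seq I) (P : pred I) (F : I -> _) x :
  herm (\sum_(i <- r | P i) F i) x = \sum_(i <- r | P i) herm (F i) x.
Proof.
elim/big_rec2: _ => [|i a b _ <-]; last by rewrite hermDl.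
by rewrite /herm (killing0l br_lie) oppr0.
Qed.

Lemma herm_sumr I (r : seq I) (P : pred I) (F : I -> _) x :
  herm x (\sum_(i <- r | P i) F i) = \sum_(i <- r | P i) herm x (F i).
Proof.
elim/big_rec2: _ => [|i a b _ <-]; last by rewrite hermDr.
by rewrite /herm theta0 (killing0r br_lie) oppr0.
Qed.

Lemma herm_brl A x y : theta A = A -> herm (br A x) y = - herm x (br A y).
Proof. by move=> thA; rewrite /herm killing_brl // !opprK theta_br thA. Qed.

Lemma killing_fixed_le0 y : theta y = y -> killing br y y <= 0.
Proof.
case: theta_compact => _ _ _ _ neg thy.
by have [->|y0] := eqVneq y 0; [rewrite (killing0l br_lie) | exact/ltW/neg].
Qed.

Lemma herm_gt0 x : x != 0 -> 0 < herm x x.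
Proof.
move=> x0.
set x1 := (2^-1 : R[i]) *: (x + theta x).
set x2 := 'i%C *: ((2^-1 : R[i]) *: (theta x - x)).
have conj_half : ((2^-1 : R[i])^*)%C = 2^-1 by rewrite conjc_inv conjc_nat.
have thx1 : theta x1 = x1 by rewrite /x1 thetaZ thetaD thetaK addrC conj_half.
have thx2 : theta x2 = x2.
  by rewrite /x2 theta_iZ thetaZ conj_half thetaB thetaK -!scalerN opprB.
have ex : x = x1 + 'i%C *: x2.
  rewrite /x1 /x2 !scalerA -expr2 sqr_i mulN1r scaleNr -scalerN opprB -scalerDr.
  by rewrite addrACA subrr addr0 -mulr2n -scalerMnr scalerMnl -mulr_natr mulVf ?scale1r ?pnatr_eq0.
have ethx : theta x = x1 - 'i%C *: x2 by rewrite {1}ex thetaD theta_iZ thx1 thx2.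
clearbody x1 x2.
have -> : herm x x = - (killing br x1 x1 + killing br x2 x2).
  rewrite /herm ethx {1}ex killingDl // !killingBr // !killingZl // !killingZr //.
  by rewrite (killingC br x2 x1) mulrA -expr2 sqr_i mulN1r; ring.
rewrite oppr_gt0; case: theta_compact => _ _ _ _ neg.
have le1 := killing_fixed_le0 thx1; have le2 := killing_fixed_le0 thx2.
have [x1_0|x1_0] := eqVneq x1 0; last by have := ltr_leD (neg _ thx1 x1_0) le2; rewrite addr0.
rewrite x1_0 (killing0l br_lie) add0r; apply: neg => //; apply: contra x0 => /eqP x2_0.
by rewrite ex x1_0 x2_0 scaler0 addr0.
Qed.

Lemma herm_eq0 x : herm x x = 0 -> x = 0.
Proof. by move=> h; have [|x0] // := eqVneq x 0; have := herm_gt0 x0; rewrite h ltxx. Qed.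

End CompactConjugation.

Section CartanSubalgebra.
Variables (R : realType) (n : nat) (br : 'rV[R[i]]_n -> 'rV[R[i]]_n -> 'rV[R[i]]_n)
  (theta : 'rV[R[i]]_n -> 'rV[R[i]]_n) (t : 'rV[R[i]]_n -> Prop).
Hypothesis br_lie : lie_bracket br.
Hypothesis theta_compact : compact_conjugation br theta.
Hypothesis t_max : max_abelian_in br (kset theta) t.

Lemma t0 : t 0.
Proof. by case: t_max => -[]. Qed.

Lemma tN x : t x -> t (- x).
Proof.
case: t_max => -[_ _ tZ] _ _ _ /(tZ (-1)).
by rewrite (_ : (-1)%:C%C = -1) ?scaleN1r // rmorphN1.
Qed.

Lemma t_theta x : t x -> theta x = x.
Proof. by case: t_max => _ tk _ _ /tk. Qed.

Lemma br_t x y : t x -> t y -> br x y = 0.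
Proof. by case: t_max => _ _ tcomm _; apply: tcomm. Qed.

Lemma hset_t x : t x -> hset t x.
Proof. by move=> tx; exists x, 0; rewrite scaler0 addr0; split=> //; exact: t0. Qed.

Lemma hset0 : hset t 0.
Proof. exact/hset_t/t0. Qed.

Lemma hset_iZ x : t x -> hset t ('i%C *: x).
Proof. by move=> tx; exists 0, x; rewrite add0r; split=> //; exact: t0. Qed.

Lemma hset_theta Z : hset t Z -> hset t (theta Z).
Proof.
move=> [A [B [tA tB ->]]]; exists A, (- B); split=> //; first exact: tN.
by rewrite (thetaD theta_compact) (theta_iZ theta_compact) !t_theta // scalerN.
Qed.

Lemma hset_fixed Z : hset t Z -> theta Z = Z -> t Z.
Proof.
move=> [A [B [tA tB ->]]].
rewrite (thetaD theta_compact) (theta_iZ theta_compact) !t_theta // => /addrI eB.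
have /eqP : ('i%C + 'i%C) *: B = 0 by rewrite scalerDl -{1}eB addNr.
rewrite scaler_eq0 => /orP[|/eqP ->]; last by rewrite scaler0 addr0.
by rewrite eq_complex /= => /andP[_ /eqP]; lra.
Qed.

Lemma br_hset_t Z X : hset t Z -> t X -> br Z X = 0.
Proof.
move=> [A [B [tA tB ->]]] tX.
by rewrite (brDl br_lie) (brZl br_lie) !br_t // scaler0 addr0.
Qed.

Lemma br_hset Z X : hset t Z -> hset t X -> br Z X = 0.
Proof.
move=> hZ [A [B [tA tB ->]]].
by rewrite (brDr br_lie) (brZr br_lie) !(br_hset_t hZ) // scaler0 addr0.
Qed.

Lemma root_space0_hset Z : hset t Z -> root_space br t (fun _ => 0) Z.
Proof. by move=> hZ Z' hZ'; rewrite scale0r br_hset. Qed.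

Lemma root_spaceZ al c X : root_space br t al X -> root_space br t al (c *: X).
Proof. by move=> rX Z hZ; rewrite (brZr br_lie) rX // !scalerA mulrC. Qed.

Section RootFunctional.
Variables (al : 'rV[R[i]]_n -> R[i]) (X : 'rV[R[i]]_n).
Hypotheses (rX : root_space br t al X) (X0 : X != 0).

(* The root vector X witnesses the linearity of al on h. *)
Lemma root_linear c Z1 Z2 : hset t Z1 -> hset t Z2 -> hset t (c *: Z1 + Z2) ->
  al (c *: Z1 + Z2) = c * al Z1 + al Z2.
Proof.
move=> h1 h2 h3; apply/eqP; rewrite -subr_eq0; apply/eqP.
have := rX h3; rewrite (brDl br_lie) (brZl br_lie) rX // rX // scalerA -scalerDl.
move=> /eqP; rewrite -subr_eq0 -scalerBl scaler_eq0 (negbTE X0) orbF subr_eq0.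
by move=> /eqP ->; rewrite subrr.
Qed.

Lemma root0 : al 0 = 0.
Proof.
have := @root_linear 1 0 0 hset0 hset0; rewrite scale1r addr0 mul1r => /(_ hset0).
by move/eqP; rewrite -subr_eq subrr eq_sym => /eqP.
Qed.

Lemma root_add_iZ A B : t A -> t B -> al (A + 'i%C *: B) = al A + 'i%C * al B.
Proof.
move=> tA tB; rewrite (addrC A) root_linear.
- by rewrite addrC.
- exact: hset_t.
- exact: hset_t.
by exists A, B; rewrite addrC.
Qed.

Lemma root_iZ B : t B -> al ('i%C *: B) = 'i%C * al B.
Proof. by move=> tB; have := root_add_iZ t0 tB; rewrite add0r root0 add0r. Qed.

(* Roots are imaginary on t since ad A is skew for the Hermitian form. *)
Lemma conjc_root_t A : t A -> ((al A)^*)%C = - al A.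
Proof.
move=> tA; have := herm_brl br_lie theta_compact X X (t_theta tA).
rewrite rX; last exact: hset_t.
rewrite (hermZl theta br_lie) (hermZr br_lie theta_compact) => /eqP.
rewrite -mulNr -subr_eq0 -mulrBl mulf_eq0 opprK addrC addr_eq0 => /orP[/eqP //|].
by move=> /eqP /(herm_eq0 br_lie theta_compact) /eqP; rewrite (negbTE X0).
Qed.

Lemma rootN B : t B -> al (- B) = - al B.
Proof.
move=> tB; have := @root_linear (-1) B 0; rewrite scaleN1r !addr0 mulN1r root0 addr0.
by apply; [exact: hset_t | exact: hset0 | exact/hset_t/tN].
Qed.

Lemma conjc_root_theta Z : hset t Z -> ((al (theta Z))^*)%C = - al Z.
Proof.
move=> [A [B [tA tB ->]]].
rewrite (thetaD theta_compact) (theta_iZ theta_compact) !t_theta // -scalerN.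
rewrite !root_add_iZ //; last exact: tN.
rewrite (rootN tB) conjcD conjcM conjcN conjc_i.
by rewrite !conjc_root_t //; ring.
Qed.

Lemma root_real_on_a H : aset t H -> al H = ((complex.Re (al H))%:C)%C.
Proof.
move=> [B [tB ->]]; apply: conjc_fixed_real.
by rewrite root_iZ // conjcM conjc_i conjc_root_t // mulrNN.
Qed.

End RootFunctional.

Lemma root_space_theta al X :
  root_space br t al X -> root_space br t (fun Z => - al Z) (theta X).
Proof.
move=> rX; have [->|X0] := eqVneq X 0.
  by move=> Z hZ; rewrite (theta0 theta_compact) (br0r br_lie) scaler0.
move=> Z hZ /=; rewrite -{1}(thetaK theta_compact Z) -(theta_br theta_compact).
rewrite rX; last exact: hset_theta.
by rewrite (thetaZ theta_compact) (conjc_root_theta rX X0 hZ).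
Qed.

Lemma is_rootN al : is_root br t al -> is_root br t (fun Z => - al Z).
Proof.
move=> [[Z [hZ alZ]] [X [X0 rX]]]; split; first by exists Z; rewrite oppr_eq0.
exists (theta X); split; last exact: root_space_theta.
by apply: contra X0 => /eqP thX0; rewrite -(thetaK theta_compact X) thX0 (theta0 theta_compact).
Qed.

Lemma killing_root_spaces f g x y :
  root_space br t f x -> root_space br t g y ->
  (exists Z, hset t Z /\ f Z + g Z != 0) -> killing br x y = 0.
Proof.
move=> rx ry [Z [hZ fg0]].
have := killing_brl br_lie Z x y; rewrite rx // ry // (killingZl br_lie) (killingZr br_lie).
move=> /eqP; rewrite -mulNr -subr_eq0 -mulrBl opprK mulf_eq0 (negbTE fg0) /=.
by move/eqP.
Qed.

Lemma herm_root_spaces f g x y :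
  root_space br t f x -> root_space br t g y ->
  (exists Z, hset t Z /\ f Z != g Z) -> herm br theta x y = 0.
Proof.
move=> rx ry [Z [hZ fg]]; rewrite /herm (killing_root_spaces rx (root_space_theta ry)).
  by rewrite oppr0.
by exists Z; split=> //; rewrite subr_eq0.
Qed.

Lemma iter_br_root_space al X H k : root_space br t al X -> hset t H ->
  iter k (br H) X = (al H ^+ k) *: X.
Proof.
move=> rX hH; elim: k => [|k IH]; first by rewrite expr0 scale1r.
by rewrite iterS IH (brZr br_lie) rX // scalerA exprS mulrC.
Qed.

End CartanSubalgebra.

Lemma ReD (R : realType) (a b : R[i]) : complex.Re (a + b) = complex.Re a + complex.Re b.
Proof. by case: a; case: b. Qed.

Lemma ImD (R : realType) (a b : R[i]) : complex.Im (a + b) = complex.Im a + complex.Im b.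
Proof. by case: a; case: b. Qed.

Lemma ReN (R : realType) (a : R[i]) : complex.Re (- a) = - complex.Re a.
Proof. by case: a. Qed.

Lemma Re_realM (R : realType) (a : R) (z : R[i]) :
  complex.Re ((a%:C)%C * z) = a * complex.Re z.
Proof. by case: z => x y /=; ring. Qed.

Lemma Im_realM (R : realType) (a : R) (z : R[i]) :
  complex.Im ((a%:C)%C * z) = a * complex.Im z.
Proof. by case: z => x y /=; ring. Qed.

Section AdjointExponential.
Variables (R : realType) (n : nat) (br : 'rV[R[i]]_n -> 'rV[R[i]]_n -> 'rV[R[i]]_n).
Hypothesis br_lie : lie_bracket br.

Lemma Ad_exp_eigen H X (r : R) : (forall k, iter k (br H) X = ((r%:C)%C ^+ k) *: X) ->
  Ad_exp_rel br H X (((expR r)%:C)%C *: X).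
Proof.
move=> iterX j.
have e N : \sum_(k < N) ((k`!)%:R)^-1 * (iter k (br H) X) 0 j =
    ((series (exp_coeff r) N)%:C)%C * X 0 j.
  rewrite /series /= big_mkord rmorph_sum mulr_suml.
  apply: eq_bigr => k _; rewrite iterX mxE /exp_coeff /=.
  by rewrite rmorphM rmorphXn fmorphV rmorph_nat mulrA [_ * _^-1]mulrC.
have cvg_e z : ((fun N => series (exp_coeff r) N * z) @ \oo --> expR r * z)%classic.
  by apply: cvgM; [exact: is_cvg_series_exp_coeff | exact: cvg_cst].
rewrite mxE Re_realM Im_realM.
by split; under eq_fun do rewrite e ?Re_realM ?Im_realM; exact: cvg_e.
Qed.

Lemma Ad_exp_centralizer H Y : br H Y = 0 -> Ad_exp_rel br H Y Y.
Proof.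
move=> HY; have := @Ad_exp_eigen H Y 0; rewrite expR0 scale1r.
apply=> -[|k]; first by rewrite expr0 scale1r.
rewrite expr0n scale0r /=.
by elim: k => [|k IH] //=; rewrite IH (br0r br_lie).
Qed.

Lemma iter_brD H X1 X2 k :
  iter k (br H) (X1 + X2) = iter k (br H) X1 + iter k (br H) X2.
Proof. by elim: k => [|k IH] //=; rewrite IH (brDr br_lie). Qed.

Lemma Ad_expD H X1 Y1 X2 Y2 : Ad_exp_rel br H X1 Y1 -> Ad_exp_rel br H X2 Y2 ->
  Ad_exp_rel br H (X1 + X2) (Y1 + Y2).
Proof.
move=> h1 h2 j; have [re1 im1] := h1 j; have [re2 im2] := h2 j.
have e N : \sum_(k < N) ((k`!)%:R)^-1 * (iter k (br H) (X1 + X2)) 0 j =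
    \sum_(k < N) ((k`!)%:R)^-1 * (iter k (br H) X1) 0 j +
    \sum_(k < N) ((k`!)%:R)^-1 * (iter k (br H) X2) 0 j.
  by rewrite -big_split; apply: eq_bigr => k _; rewrite iter_brD mxE mulrDr.
rewrite mxE ReD ImD.
by split; under eq_fun do rewrite e ?ReD ?ImD; apply: cvgD.
Qed.

Lemma Ad_exp_sum H I (r : seq I) (P : pred I) (Xf Yf : I -> 'rV[R[i]]_n) :
  (forall i, P i -> Ad_exp_rel br H (Xf i) (Yf i)) ->
  Ad_exp_rel br H (\sum_(i <- r | P i) Xf i) (\sum_(i <- r | P i) Yf i).
Proof.
move=> h; elim/big_rec2: _ => [|i a b Pi IH]; last exact: Ad_expD (h i Pi) IH.
by apply: Ad_exp_centralizer; rewrite (br0r br_lie).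
Qed.

Lemma Ad_exp_unique H X Y1 Y2 : Ad_exp_rel br H X Y1 -> Ad_exp_rel br H X Y2 -> Y1 = Y2.
Proof.
move=> h1 h2; apply/rowP => j; have [re1 im1] := h1 j; have [re2 im2] := h2 j.
have eRe : complex.Re (Y1 0 j) = complex.Re (Y2 0 j) := cvg_unique _ re1 re2.
have eIm : complex.Im (Y1 0 j) = complex.Im (Y2 0 j) := cvg_unique _ im1 im2.
move: eRe eIm; case: (Y1 0 j) => a b; case: (Y2 0 j) => c d e1 e2.
by congr Complex; [exact: e1 | exact: e2].
Qed.

End AdjointExponential.

Section SimpleRoots.
Variables (R : realType) (n l : nat) (br : 'rV[R[i]]_n -> 'rV[R[i]]_n -> 'rV[R[i]]_n)
  (t : 'rV[R[i]]_n -> Prop) (alpha : 'I_l -> 'rV[R[i]]_n -> R[i]).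
Hypothesis alpha_simple : simple_system br t alpha.

Lemma root_coeffs_eq0 (m : 'I_l -> int) :
  (forall Z, hset t Z -> \sum_(i < l) (m i)%:~R * alpha i Z = 0) -> forall i, m i = 0.
Proof.
case: alpha_simple => _ free _ h i; have := free (fun i => (m i)%:~R) h i.
by move/eqP; rewrite intr_eq0 => /eqP.
Qed.

Lemma root_coeffs_unique al al' m m' :
  root_coeffs t alpha al m -> root_coeffs t alpha al' m' ->
  (forall Z, hset t Z -> al Z = al' Z) -> forall i, m i = m' i.
Proof.
move=> cm cm' eal i; apply/eqP; rewrite -subr_eq0; apply/eqP; move: i.
apply: root_coeffs_eq0 => Z hZ.
under eq_bigr => i _ do rewrite intrB mulrBl.
by rewrite sumrB -cm // -cm' // eal // subrr.
Qed.

Lemma root_coeffsN al m : root_coeffs t alpha al m ->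
  root_coeffs t alpha (fun Z => - al Z) (fun i => - m i).
Proof.
by move=> cm Z hZ; rewrite cm // -sumrN; apply: eq_bigr => i _; rewrite intrN mulNr.
Qed.

Lemma root_coeffsD al al' m m' :
  root_coeffs t alpha al m -> root_coeffs t alpha al' m' ->
  root_coeffs t alpha (fun Z => al Z + al' Z) (fun i => m i + m' i).
Proof.
move=> cm cm' Z hZ; rewrite cm // cm' // -big_split.
by apply: eq_bigr => i _; rewrite intrD mulrDl.
Qed.

Lemma pos_roots_addr_neq0 b b' :
  is_pos_root br t alpha b -> is_pos_root br t alpha b' ->
  exists Z, hset t Z /\ b Z + b' Z != 0.
Proof.
move=> [[[Z [hZ bZ]] _] [m [cm m_ge0]]] [_ [m' [cm' m'_ge0]]].
apply/not_existsP => sum0.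
have mm'0 : forall i, m i + m' i = 0.
  apply: root_coeffs_eq0 => Z' hZ'; rewrite -(root_coeffsD cm cm') //.
  by apply/eqP/negPn/negP => nz; apply: (sum0 Z').
have m0 i : m i = 0.
  by have /eqP := mm'0 i; rewrite paddr_eq0 ?m_ge0 ?m'_ge0 // => /andP[/eqP].
by move: bZ; rewrite cm // big1 ?eqxx // => i _; rewrite m0 mul0r.
Qed.

Section OutsideSpan.
Variables (s : 'I_l -> int) (b g : 'rV[R[i]]_n -> R[i]) (mg : 'I_l -> int).
Hypotheses (b_root : is_root br t b) (b_notin : ~ in_span_S br t alpha s b).
Hypotheses (cg : root_coeffs t alpha g mg) (mg_span : forall i, mg i != 0 -> s i != 0).

Lemma notin_span_neq : exists Z, hset t Z /\ b Z != g Z.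
Proof.
apply/not_existsP => eq_bg; apply: b_notin; split=> //.
exists mg; split=> // Z hZ; rewrite -cg //.
by apply/eqP/negPn/negP => nz; apply: (eq_bg Z).
Qed.

Lemma notin_span_addr_neq0 : exists Z, hset t Z /\ b Z + g Z != 0.
Proof.
apply/not_existsP => sum0; apply: b_notin; split=> //.
exists (fun i => - mg i); split=> [Z hZ|i]; last by rewrite oppr_eq0; exact: mg_span.
rewrite -(root_coeffsN cg) //; apply/eqP; rewrite -addr_eq0.
by apply/negPn/negP => nz; apply: (sum0 Z).
Qed.

End OutsideSpan.
End SimpleRoots.

Lemma sigma_valN l (s : 'I_l -> int) m : sigma_val s (fun i => - m i) = sigma_val s m.
Proof. by apply: eq_bigr => i _; rewrite abszN. Qed.

Lemma sigma_val_neq0_span l (s : 'I_l -> int) m :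
  sigma_val s m != 0 -> forall i, m i != 0 -> s i != 0.
Proof.
move=> sm0 i mi0; move: sm0; rewrite /sigma_val (bigD1 i) //= mulf_eq0 negb_or.
by case/andP=> + _; rewrite expf_eq0 absz_gt0 mi0.
Qed.

Lemma sigma_val_eq1_or_le0 l (s : 'I_l -> int) m :
  ext_signature s -> sigma_val s m = 1 \/ sigma_val s m <= 0.
Proof.
move=> sig; suff : sigma_val s m \in [:: -1; 0; 1].
  by rewrite !inE => /or3P[] /eqP ->; [right|right|left].
have mul_closed x y : x \in [:: -1; 0; 1] -> y \in [:: -1; 0; 1] ->
    (x * y : int) \in [:: -1; 0; 1].
  by rewrite !inE => /or3P[] /eqP -> /or3P[] /eqP ->.
rewrite /sigma_val; apply: (big_ind (fun x : int => x \in [:: -1; 0; 1])) => [|//|i _].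
  by rewrite !inE.
by elim: `|m i|%N => [|k IH]; [rewrite expr0 !inE | rewrite exprS mul_closed].
Qed.

Lemma expR_eq_sign (R : realType) (r : R) (sg : int) :
  sg = 1 \/ sg <= 0 -> expR r = expR (- r) * sg%:~R -> r = 0 /\ sg = 1.
Proof.
have e0 := expR_gt0 r; have e1 := expR_gt0 (- r).
case=> [->|sg_le0]; first by rewrite mulr1 => /expR_inj rNr; split=> //; lra.
have : expR (- r) * sg%:~R <= 0 by apply: mulr_ge0_le0; [exact: ltW | rewrite lerz0].
by move=> le0 e; exfalso; lra.
Qed.

Lemma exists_neq_or_eq_on (T : Type) (U : eqType) (P : T -> Prop) (f g : T -> U) :
  (exists Z, P Z /\ f Z != g Z) \/ (forall Z, P Z -> f Z = g Z).
Proof.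
case: (pselect (forall Z, P Z -> f Z = g Z)) => [|/existsNP[Z /not_implyP[PZ /eqP fg]]].
  by right.
by left; exists Z.
Qed.

Section LagrangianIntersection.
Variables (R : realType) (n l : nat) (br : 'rV[R[i]]_n -> 'rV[R[i]]_n -> 'rV[R[i]]_n)
  (theta : 'rV[R[i]]_n -> 'rV[R[i]]_n) (t : 'rV[R[i]]_n -> Prop)
  (alpha : 'I_l -> 'rV[R[i]]_n -> R[i]) (s : 'I_l -> int) (H : 'rV[R[i]]_n).
Hypothesis br_lie : lie_bracket br.
Hypothesis theta_compact : compact_conjugation br theta.
Hypothesis t_max : max_abelian_in br (kset theta) t.
Hypothesis alpha_simple : simple_system br t alpha.
Hypothesis s_ext : ext_signature s.
Hypothesis H_a : aset t H.

Local Notation V := 'rV[R[i]]_n.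
Local Notation herm := (herm br theta).

Lemma hset_H : hset t H.
Proof. by case: H_a => B [tB ->]; exact: (hset_iZ t_max). Qed.

Lemma root_real_at_H f : is_root br t f -> f H = ((complex.Re (f H))%:C)%C.
Proof.
by move=> [_ [Y [Y0 rY]]]; exact: (root_real_on_a br_lie theta_compact t_max rY Y0 H_a).
Qed.

Lemma Ad_exp_root_space f Y : is_root br t f -> root_space br t f Y ->
  Ad_exp_rel br H Y (((expR (complex.Re (f H)))%:C)%C *: Y).
Proof.
move=> f_root rY; apply: Ad_exp_eigen => k.
by rewrite (iter_br_root_space br_lie k rY hset_H) -root_real_at_H.
Qed.

Section FixedElement.
Hypothesis root_H_neq0 : forall (al : V -> R[i]) (m : 'I_l -> int),
  is_root br t al -> root_coeffs t alpha al m -> sigma_val s m = 1 -> al H != 0.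

Variables (X Z A : V) (k kN : nat) (al : 'I_k -> V -> R[i]) (m : 'I_k -> 'I_l -> int)
  (W : 'I_k -> V) (be : 'I_kN -> V -> R[i]) (N : 'I_kN -> V).
Hypothesis hZ : hset t Z.
Hypothesis W_root : forall j, [/\ in_span_S br t alpha s (al j),
  root_coeffs t alpha (al j) (m j) & root_space br t (al j) (W j)].
Hypothesis N_root : forall kk, [/\ is_pos_root br t alpha (be kk),
  ~ in_span_S br t alpha s (be kk) & root_space br t (be kk) (N kk)].
Hypothesis thetaA : theta A = Z + \sum_(j < k) W j.
Hypothesis eA : A = Z + \sum_(j < k) ((sigma_val s (m j))%:~R : R[i]) *: W j.
Hypothesis AdX : Ad_exp_rel br H (A + \sum_(kk < kN) N kk) X.
Hypothesis thetaX : theta X = X.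

Let sg j : R[i] := (sigma_val s (m j))%:~R.
Let ev j : R[i] := ((expR (complex.Re (al j H)))%:C)%C.
Let evN j : R[i] := ((expR (- complex.Re (al j H)))%:C)%C.

Let al_root j : is_root br t (al j). Proof. by case: (W_root j) => -[]. Qed.
Let al_coeffs j : root_coeffs t alpha (al j) (m j). Proof. by case: (W_root j). Qed.
Let W_space j : root_space br t (al j) (W j). Proof. by case: (W_root j). Qed.
Let be_pos kk : is_pos_root br t alpha (be kk). Proof. by case: (N_root kk). Qed.
Let be_root kk : is_root br t (be kk). Proof. by case: (be_pos kk). Qed.
Let be_notin kk : ~ in_span_S br t alpha s (be kk). Proof. by case: (N_root kk). Qed.
Let N_space kk : root_space br t (be kk) (N kk). Proof. by case: (N_root kk). Qed.

Let m_span j i : m j i != 0 -> s i != 0.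
Proof.
case: (W_root j) => -[_ [m' [cm' m'_span]]] cm _ mji.
by apply: m'_span; rewrite -(root_coeffs_unique alpha_simple cm cm' (fun _ _ => erefl)).
Qed.

Lemma X_decomp : X = Z + \sum_(j < k) ev j *: (sg j *: W j) +
  \sum_(kk < kN) ((expR (complex.Re (be kk H)))%:C)%C *: N kk.
Proof.
apply: (Ad_exp_unique AdX); rewrite eA.
apply: (Ad_expD br_lie); first apply: (Ad_expD br_lie).
- by apply: (Ad_exp_centralizer br_lie); rewrite (br_hset br_lie t_max hset_H hZ).
- apply: (Ad_exp_sum br_lie) => j _.
  exact/Ad_exp_root_space/(root_spaceZ br_lie)/W_space/al_root.
- by apply: (Ad_exp_sum br_lie) => kk _; apply/Ad_exp_root_space.
Qed.

Lemma herm_W_Z j : herm (W j) Z = 0.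
Proof.
apply: (herm_root_spaces br_lie theta_compact t_max (W_space j)
  (root_space0_hset br_lie t_max hZ)).
by case: (al_root j) => -[Z0 [hZ0 nz]] _; exists Z0.
Qed.

Lemma herm_N_Z kk : herm (N kk) Z = 0.
Proof.
apply: (herm_root_spaces br_lie theta_compact t_max (N_space kk)
  (root_space0_hset br_lie t_max hZ)).
by case: (be_root kk) => -[Z0 [hZ0 nz]] _; exists Z0.
Qed.

Lemma killing_W_Z j : killing br (W j) Z = 0.
Proof.
apply: (killing_root_spaces br_lie (W_space j) (root_space0_hset br_lie t_max hZ)).
by case: (al_root j) => -[Z0 [hZ0 nz]] _; exists Z0; rewrite addr0.
Qed.

Lemma killing_N_Z kk : killing br (N kk) Z = 0.
Proof.
apply: (killing_root_spaces br_lie (N_space kk) (root_space0_hset br_lie t_max hZ)).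
by case: (be_root kk) => -[Z0 [hZ0 nz]] _; exists Z0; rewrite addr0.
Qed.

Lemma killing_N_W kk j : killing br (N kk) (W j) = 0.
Proof.
apply: (killing_root_spaces br_lie (N_space kk) (W_space j)).
exact: (notin_span_addr_neq0 (be_root kk) (@be_notin kk) (al_coeffs j) (@m_span j)).
Qed.

Lemma killing_N_N kk kk' : killing br (N kk) (N kk') = 0.
Proof.
apply: (killing_root_spaces br_lie (N_space kk) (N_space kk')).
exact: (pos_roots_addr_neq0 alpha_simple (be_pos kk) (be_pos kk')).
Qed.

Lemma herm_W_N j kk : herm (W j) (N kk) = 0.
Proof.
apply: (herm_root_spaces br_lie theta_compact t_max (W_space j) (N_space kk)).
have [Z0 [hZ0 neq]] := notin_span_neq (be_root kk) (@be_notin kk) (al_coeffs j) (@m_span j).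
by exists Z0; rewrite eq_sym.
Qed.

Lemma herm_N_X kk : herm (N kk) X = 0.
Proof.
rewrite /herm thetaX X_decomp !(killingDr br_lie) !(killing_sumr br_lie) killing_N_Z.
rewrite big1 => [|j _]; last by rewrite !(killingZr br_lie) killing_N_W !mulr0.
rewrite big1 => [|kk' _]; last by rewrite (killingZr br_lie) killing_N_N mulr0.
by rewrite !addr0 oppr0.
Qed.

Lemma sg_eq j0 j : (forall Z, hset t Z -> al j0 Z = al j Z) -> sg j0 = sg j.
Proof.
move=> eq_al; rewrite /sg; congr (_%:~R); apply: eq_bigr => i _.
by rewrite (root_coeffs_unique alpha_simple (al_coeffs j0) (al_coeffs j) eq_al).
Qed.

Lemma sg_eqN j0 j : (forall Z, hset t Z -> - al j0 Z = al j Z) -> sg j0 = sg j.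
Proof.
move=> eq_al; rewrite /sg -sigma_valN; congr (_%:~R); apply: eq_bigr => i _.
by rewrite (root_coeffs_unique alpha_simple (root_coeffsN (al_coeffs j0)) (al_coeffs j) eq_al).
Qed.

Lemma herm_W_sgW j0 j : herm (W j0) (sg j *: W j) = sg j0 * herm (W j0) (W j).
Proof.
rewrite (hermZr br_lie theta_compact) /sg conjc_int -/(sg j).
have [neq|eq_al] := exists_neq_or_eq_on (hset t) (al j0) (al j).
  by rewrite (herm_root_spaces br_lie theta_compact t_max (W_space j0) (W_space j) neq) !mulr0.
by rewrite -(sg_eq eq_al).
Qed.

Lemma herm_W_T j0 j :
  herm (W j0) (ev j *: (sg j *: W j)) = ev j0 * sg j0 * herm (W j0) (W j).
Proof.
rewrite (hermZr br_lie theta_compact) conjc_real herm_W_sgW mulrA.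
have [neq|eq_al] := exists_neq_or_eq_on (hset t) (al j0) (al j).
  by rewrite (herm_root_spaces br_lie theta_compact t_max (W_space j0) (W_space j) neq) !mulr0.
by rewrite /ev (eq_al H hset_H).
Qed.

Lemma killing_W_T j0 j :
  killing br (W j0) (ev j *: (sg j *: W j)) = evN j0 * sg j0 * killing br (W j0) (W j).
Proof.
rewrite !(killingZr br_lie) mulrA.
have [[Z0 [hZ0 neq]]|eq_al] := exists_neq_or_eq_on (hset t) (fun Z => - al j0 Z) (al j).
  rewrite (killing_root_spaces br_lie (W_space j0) (W_space j)) ?mulr0 //.
  by exists Z0; split=> //; rewrite addrC -(opprK (al j0 Z0)) subr_eq0 eq_sym.
by rewrite (sg_eqN eq_al) /ev /evN -(eq_al H hset_H) ReN.
Qed.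

Lemma herm_W_X_expand j0 :
  herm (W j0) X = ev j0 * sg j0 * \sum_(j < k) herm (W j0) (W j).
Proof.
rewrite X_decomp !(hermDr br_lie theta_compact) !(herm_sumr br_lie theta_compact).
rewrite herm_W_Z add0r [X in _ + X]big1 => [|kk _]; last first.
  by rewrite (hermZr br_lie theta_compact) herm_W_N mulr0.
by rewrite addr0 mulr_sumr; apply: eq_bigr => j _; rewrite herm_W_T.
Qed.

Lemma killing_W_X_expand j0 :
  killing br (W j0) X = evN j0 * sg j0 * \sum_(j < k) killing br (W j0) (W j).
Proof.
rewrite X_decomp !(killingDr br_lie) !(killing_sumr br_lie) killing_W_Z add0r.
rewrite [X in _ + X]big1 => [|kk _]; last first.
  by rewrite (killingZr br_lie) killingC killing_N_W mulr0.
by rewrite addr0 mulr_sumr; apply: eq_bigr => j _; rewrite killing_W_T.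
Qed.

Lemma herm_W_A j0 : herm (W j0) A = sg j0 * \sum_(j < k) herm (W j0) (W j).
Proof.
rewrite eA (hermDr br_lie theta_compact) (herm_sumr br_lie theta_compact) herm_W_Z add0r.
by rewrite mulr_sumr; apply: eq_bigr => j _; rewrite herm_W_sgW.
Qed.

Lemma killing_W_thetaA j0 :
  killing br (W j0) (theta A) = \sum_(j < k) killing br (W j0) (W j).
Proof. by rewrite thetaA (killingDr br_lie) (killing_sumr br_lie) killing_W_Z add0r. Qed.

Lemma herm_W_X j0 : herm (W j0) X = 0.
Proof.
set q := \sum_(j < k) herm (W j0) (W j).
have kA : killing br (W j0) (theta A) = - (sg j0 * q) by rewrite -herm_W_A opprK.
have key : ev j0 * (sg j0 * q) = evN j0 * sg j0 * (sg j0 * q).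
  rewrite mulrA -herm_W_X_expand {1}/herm thetaX killing_W_X_expand.
  by rewrite -killing_W_thetaA kA mulrN opprK.
have [sq0|sq_neq0] := eqVneq (sg j0 * q) 0; first by rewrite herm_W_X_expand -mulrA sq0 mulr0.
have e : expR (complex.Re (al j0 H)) =
    expR (- complex.Re (al j0 H)) * (sigma_val s (m j0))%:~R.
  by apply: (@complexI R); rewrite rmorphM rmorph_int; exact: (mulIf sq_neq0).
have [r0 s1] := expR_eq_sign (sigma_val_eq1_or_le0 (m j0) s_ext) e.
have := root_H_neq0 (al_root j0) (al_coeffs j0) s1.
by rewrite root_real_at_H ?al_root // r0 eqxx.
Qed.

Lemma fixed_element_in_t : t X.
Proof.
set U := \sum_(j < k) ev j *: (sg j *: W j) +
  \sum_(kk < kN) ((expR (complex.Re (be kk H)))%:C)%C *: N kk.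
have eXU : X = Z + U by rewrite /U addrA; exact: X_decomp.
have herm_U Y : (forall j, herm (W j) Y = 0) -> (forall kk, herm (N kk) Y = 0) ->
    herm U Y = 0.
  move=> hW hN; rewrite /U (hermDl theta br_lie) !(herm_suml theta br_lie).
  rewrite big1 => [|j _]; last by rewrite !(hermZl theta br_lie) hW !mulr0.
  by rewrite big1 ?addr0 // => kk _; rewrite (hermZl theta br_lie) hN mulr0.
have hUZ := herm_U Z herm_W_Z herm_N_Z.
have U0 : U = 0.
  apply: (herm_eq0 br_lie theta_compact).
  by move: (herm_U X herm_W_X herm_N_X); rewrite {1}eXU (hermDr br_lie theta_compact) hUZ add0r.
have eXZ : X = Z by rewrite eXU U0 addr0.
by rewrite eXZ; apply: (hset_fixed theta_compact t_max hZ); rewrite -eXZ.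
Qed.

End FixedElement.
End LagrangianIntersection.

Section SpanOf.
Variables (R : realType) (n : nat) (P : 'rV[R[i]]_n -> Prop).

Lemma span_of0 : span_of P 0.
Proof. by exists 0, (fun _ => 0); split; [case | rewrite big_ord0]. Qed.

Lemma span_of1 x : P x -> span_of P x.
Proof. by move=> Px; exists 1, (fun _ => x); rewrite big_ord1. Qed.

Lemma span_of2 x y : P x -> P y -> span_of P (x + y).
Proof.
move=> Px Py; exists 2, (fun j : 'I_2 => if j == ord0 then x else y).
by split=> [j|]; [case: ifP | rewrite big_ord_recl big_ord1].
Qed.

End SpanOf.

Section Intersection.
Variables (R : realType) (n l : nat) (br : 'rV[R[i]]_n -> 'rV[R[i]]_n -> 'rV[R[i]]_n)
  (theta : 'rV[R[i]]_n -> 'rV[R[i]]_n) (t : 'rV[R[i]]_n -> Prop)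
  (alpha : 'I_l -> 'rV[R[i]]_n -> R[i]) (s : 'I_l -> int) (H : 'rV[R[i]]_n).
Hypothesis br_lie : lie_bracket br.
Hypothesis theta_compact : compact_conjugation br theta.
Hypothesis t_max : max_abelian_in br (kset theta) t.
Hypothesis alpha_simple : simple_system br t alpha.
Hypothesis s_ext : ext_signature s.
Hypothesis H_a : aset t H.

Local Notation V := 'rV[R[i]]_n.

Lemma l_H_sigma_fixed_sub_t X :
  (forall al m, is_root br t al -> root_coeffs t alpha al m ->
     sigma_val s m = 1 -> al H != 0) ->
  l_H_sigma br theta t alpha s H X -> theta X = X -> t X.
Proof.
move=> root_H_neq0 [Y [[A [B [_ aA [kN [N [N_root eB]]] eY]]] AdX]] thetaX.
move: aA => [Z [k [al [m [W [hZ W_root thetaA eA]]]]]].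
have [be be_N] := choice N_root.
apply: (fixed_element_in_t br_lie theta_compact t_max alpha_simple s_ext H_a root_H_neq0
  (be := be) hZ W_root _ thetaA eA _ thetaX) => [kk|]; first by case: (be_N kk).
by rewrite -eB -eY.
Qed.

Lemma l_sigma_t X : t X -> l_sigma br theta t alpha s X.
Proof.
move=> tX; exists X, 0; split; last by rewrite addr0.
- by apply: span_of1; left; exact: (hset_t t_max).
- rewrite (t_theta t_max tX).
  exists X, 0, (fun _ _ => 0), (fun _ _ => 0), (fun _ => 0).
  by split; rewrite ?big_ord0 ?addr0 //; [exact: (hset_t t_max) | case].
- exact: span_of0.
Qed.

Lemma t_sub_l_H_sigma_fixed X : t X -> l_H_sigma br theta t alpha s H X /\ kset theta X.
Proof.
move=> tX; split; last exact: (t_theta t_max tX).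
exists X; split; first exact: l_sigma_t.
by apply: (Ad_exp_centralizer br_lie); rewrite (br_hset_t br_lie t_max (hset_H t_max H_a)).
Qed.

Section RootPair.
Variables (al : V -> R[i]) (m : 'I_l -> int) (E : V).
Hypotheses (al_root : is_root br t al) (al_m : root_coeffs t alpha al m).
Hypotheses (s1 : sigma_val s m = 1) (rE : root_space br t al E).

Lemma root_pair_l_sigma : l_sigma br theta t alpha s (E + theta E).
Proof.
have m_span : forall i, m i != 0 -> s i != 0 by apply: sigma_val_neq0_span; rewrite s1.
have al_span : in_span_S br t alpha s al by split=> //; exists m.
have alN_span : in_span_S br t alpha s (fun Z => - al Z).
  split; first exact: (is_rootN br_lie theta_compact t_max).
  by exists (fun i => - m i); split=> [|i]; [exact: root_coeffsN | rewrite oppr_eq0; exact: m_span].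
have rthE := root_space_theta br_lie theta_compact t_max rE.
exists (E + theta E), 0; split; last by rewrite addr0.
- by apply: span_of2; right; [exists al | exists (fun Z => - al Z)].
- rewrite (thetaD theta_compact) (thetaK theta_compact) addrC.
  exists 0, 2, (fun j : 'I_2 => if j == ord0 then al else (fun Z => - al Z)),
    (fun j : 'I_2 => if j == ord0 then m else (fun i => - m i)),
    (fun j : 'I_2 => if j == ord0 then E else theta E).
  split; rewrite ?big_ord_recl ?big_ord0 /= ?sigma_valN ?s1 ?scale1r ?add0r ?addr0 //.
    exact: (hset0 t_max).
  by move=> j; case: ifP => _; split=> //; exact: root_coeffsN.
- exact: span_of0.
Qed.

Lemma root_pair_notin_t : E != 0 -> ~ t (E + theta E).
Proof.
move=> E0 tE; have [[Z0 [hZ0 alZ0]] _] := al_root.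
have rthE := root_space_theta br_lie theta_compact t_max rE.
have := br_hset_t br_lie t_max hZ0 tE.
rewrite (brDr br_lie) rE // rthE // scaleNr => /eqP; rewrite subr_eq0 => /eqP.
move=> /(scalerI alZ0) eE; have := rthE Z0 hZ0.
rewrite -eE rE // => /eqP; rewrite -subr_eq0 scaleNr opprK -scalerDl scaler_eq0.
by rewrite (negbTE E0) orbF -mulr2n mulrn_eq0 (negbTE alZ0).
Qed.

Lemma root_pair_fixed : theta (E + theta E) = E + theta E.
Proof. by rewrite (thetaD theta_compact) (thetaK theta_compact) addrC. Qed.

End RootPair.

Lemma vanishing_root_fixed_notin_t al m :
  is_root br t al -> root_coeffs t alpha al m -> sigma_val s m = 1 -> al H = 0 ->
  exists X, [/\ l_H_sigma br theta t alpha s H X, kset theta X & ~ t X].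
Proof.
move=> al_root al_m s1 alH0; have [_ [E [E0 rE]]] := al_root.
have hH := hset_H t_max H_a.
exists (E + theta E); split; [|exact: root_pair_fixed|exact: (root_pair_notin_t al_root rE E0)].
exists (E + theta E); split; first exact: (root_pair_l_sigma al_root al_m s1 rE).
apply: (Ad_exp_centralizer br_lie).
rewrite (brDr br_lie) rE // (root_space_theta br_lie theta_compact t_max rE) //.
by rewrite alH0 oppr0 !scale0r addr0.
Qed.

End Intersection.

Theorem proposition7p10 (R : realType) (n l : nat)
  (br : 'rV[R[i]]_n -> 'rV[R[i]]_n -> 'rV[R[i]]_n)
  (theta : 'rV[R[i]]_n -> 'rV[R[i]]_n)
  (t : 'rV[R[i]]_n -> Prop)
  (alpha : 'I_l -> 'rV[R[i]]_n -> R[i])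
  (s : 'I_l -> int) (H : 'rV[R[i]]_n) :
  lie_bracket br ->
  semisimple br ->
  compact_conjugation br theta ->
  max_abelian_in br (kset theta) t ->
  simple_system br t alpha ->
  ext_signature s ->
  aset t H ->
  m_sigma1 br t alpha s H ->
  ((forall X, l_H_sigma br theta t alpha s H X /\ kset theta X <-> t X) <->
   (forall (al : 'rV[R[i]]_n -> R[i]) (m : 'I_l -> int),
      is_root br t al -> root_coeffs t alpha al m ->
      sigma_val s m = 1 -> al H != 0)).
Proof.
move=> br_lie _ theta_compact t_max alpha_simple s_ext H_a _.
split=> [lHk_t al m al_root al_m s1 | root_H_neq0 X].
  apply/eqP => alH0.
  have [X [lX thX ntX]] :=
    vanishing_root_fixed_notin_t br_lie theta_compact t_max H_a al_root al_m s1 alH0.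
  by apply: ntX; apply/lHk_t.
split=> [[lX thX] | tX]; last exact: t_sub_l_H_sigma_fixed.
exact: (l_H_sigma_fixed_sub_t br_lie theta_compact t_max alpha_simple s_ext H_a).
Qed.
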